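(* Assume Setup (S) and the completion data (C). Then for every $n\ge 1$, $\Phi_n$ maps $\mathbb{Z}^{n+1}$ injectively into $C(X_{min},G)$, and $\Phi_{n+1}\circ\phi_{n*}=\Phi_n$, where $\phi_{n*}:\mathbb{Z}^{n+1}\to\mathbb{Z}^{n+2}$ is multiplication by $\overline{A}_{n,n+1}$. Consequently there is an injective group homomorphism $\Psi:K_0(\mathfrak{A})=\varinjlim(\mathbb{Z}^{n+1},\phi_{n*})\to C(X_{min},G)$ with $\Psi\circ\iota_n=\Phi_n$ ($\iota_n$ the canonical maps into the limit), and $\Psi$ sends the order unit $[1_{\mathfrak{A}}]$ to $\chi_{X_{min}}$.
   Context: Setup (S): Let $\mathfrak{A}=\varinjlim(\mathfrak{A}_n,\phi_n)$ be an AF C$^*$-algebra with $\mathfrak{A}_0=\mathbb{C}$, $\mathfrak{A}_n$ having exactly $n+1$ summands, $\phi_n$ unital injective $*$-homomorphisms with multiplicity matrices $\overline{A}_{n,n+1}\in M_{n+2,n+1}(\mathbb{N})$ ($(i,j)$ entry = multiplicity of summand $j$ of $\mathfrak{A}_n$ in summand $i$ of $\mathfrak{A}_{n+1}$), each of rank $n+1$. The Bratteli diagram has vertices $v(i,n)$, $1\le i\le n+1$, and $(\overline{A}_{n,n+1})_{ij}$ edges from $v(j,n)$ to $v(i,n+1)$. A minimal reduction is a subgraph with the same vertices, obtained by deleting edges only, in which for all $n\ge 0$ each vertex at level $n+1$ receives exactly one edge from level $n$ and each vertex at level $n$ emits at least one edge to level $n+1$. Fix a minimal reduction. Then for each $n\ge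 1$ there are unique $1\le r'_n<r_n\le n+1$ and $1\le a_n\le n$ such that $v(r'_n,n)$ and $v(r_n,n)$ are the two vertices joined to $v(a_n,n-1)$, every other vertex of level $n-1$ being joined to exactly one vertex of level $n$; set $r_0=1$. $X_{min}$ is the set of infinite paths $(v(i_n,n))_{n\ge0}$, $i_0=1$, in the minimal reduction, with the topology having as clopen basis the nonempty sets $B(i,n)=\{\text{paths with }i_n=i\}$; it is a compact metrizable totally disconnected space. Define the linear map $R_n:\mathbb{C}^{n+1}\to C(X_{min},\mathbb{C})$ by $R_n(\alpha_1,\dots,\alpha_{n+1})=\sum_{l=0}^n\alpha_{l+1}\chi_{B(r_l,l)}$. Completion data (C): $K_0(\mathfrak{A}_n)$ is identified with $\mathbb{Z}^{n+1}$ (column vectors, positive cone $\mathbb{Z}_+^{n+1}$), $K_0(\phi_n)=\phi_{n*}$ is multiplication by $\overline{A}_{n,n+1}$, and $K_0(\mathfrak{A})=\varinjlim(\mathbb{Z}^{n+1},\phi_{n*})$ with order unit the image of $1\in\mathbb{Z}=K_0(\mathfrak{A}_0)$. For each $n\ge 0$ choose a column $c_n\in\mathbb{Z}^{n+2}$ such that $A_{n,n+1}=[\,\overline{A}_{n,n+1}\mid c_n\,]\in M_{n+2}(\mathbb{Z})$ is invertible. Put $A_n=(A_{0,1}^{-1}\oplus I_{n-1})(A_{1,2}^{-1}\oplus I_{n-2})\cdots(A_{n-2,n-1}^{-1}\oplus I_1)A_{n-1,n}^{-1}$ for $n\ge1$ (so $A_1=A_{0,1}^{-1}$), let $G=\bigcup_{n\ge1}\{a/\det(A_n^{-1}):a\in\mathbb{Z}\}\subseteq\mathbb{Q}$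 with the discrete topology, and $\Phi_n=R_n\circ A_n$ restricted to $\mathbb{Z}^{n+1}$. *)

From mathcomp Require Import all_boot all_order all_algebra.
Unset Printing Implicit Defensive.
Import Order.TTheory GRing.Theory Num.Theory.
Local Open Scope ring_scope.

(* Conventions: everything is 0-indexed.  Vertex v(i,n) (1 <= i <= n+1) is
   the ordinal (i-1) : 'I_(n+1).  Abar n : 'M_(n+2, n+1) is the multiplicity
   matrix \overline{A}_{n,n+1};  c n is the extra column c_n;
   parent n : 'I_(n+2) -> 'I_(n+1) describes the minimal reduction:
   the unique edge received by v(i,n+1) comes from v(parent n i, n). *)

Section AF.
Variable Abar : forall n : nat, 'M[int]_(n.+2, n.+1).
Variable c : forall n : nat, 'cV[int]_(n.+2).
Variable parent : forall n : nat, 'I_n.+2 -> 'I_n.+1.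

Definition Afull (n : nat) : 'M[int]_(n.+2) :=
  castmx (erefl n.+2, addn1 n.+1) (row_mx (Abar n) (c n)).

Definition Ainv (n : nat) : 'M[rat]_(n.+2) := invmx (map_mx intr (Afull n)).

(* A_n = (A_{0,1}^{-1} (+) I_{n-1}) ... (A_{n-2,n-1}^{-1} (+) I_1) A_{n-1,n}^{-1},
   written recursively: A_0 = I_1, A_{n+1} = (A_n (+) I_1) A_{n,n+1}^{-1}. *)
Fixpoint Aseq (n : nat) : 'M[rat]_(n.+1) :=
  match n return 'M[rat]_(n.+1) with
  | 0 => 1%:M
  | m.+1 => castmx (addn1 m.+1, addn1 m.+1)
              (block_mx (Aseq m) (0 : 'M_(m.+1, 1)) (0 : 'M_(1, m.+1)) (1%:M : 'M_1))
            *m Ainv m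
  end.

Definition inG (q : rat) : Prop :=
  exists n : nat, (1 <= n)%N /\
    exists a : int, q = a%:~R / \det (invmx (Aseq n)).

Record Xmin := MkXmin {
  pth : forall m : nat, 'I_m.+1;
  pth_ok : forall m : nat, parent m (pth m.+1) = pth m }.

(* r_0 = v(1,0); for n >= 1, r_n is the larger of the two level-n vertices
   sharing a parent (the unique vertex having a smaller sibling). *)
Definition rvert (n : nat) : 'I_n.+1 :=
  match n return 'I_n.+1 with
  | 0 => ord0
  | m.+1 => odflt ord0
      [pick i : 'I_m.+2 | [exists j : 'I_m.+2, (j < i)%N && (parent m j == parent m i)]]
  end.

Definition chiB (l : nat) (x : Xmin) : rat := ((pth x l == rvert l) : nat)%:R.

Definition Phi (n : nat) (v : 'cV[int]_n.+1) (x : Xmin) : rat :=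
  \sum_(l < n.+1) (Aseq n *m map_mx intr v) l ord0 * chiB l x.

(* f belongs to C(X_min, G), G discrete: f takes values in G and is locally
   constant w.r.t. the clopen basis {B(i,n)}. *)
Definition in_CXG (f : Xmin -> rat) : Prop :=
  (forall x, inG (f x)) /\
  (forall x, exists n : nat, forall y, pth y n = pth x n -> f y = f x).

End AF.

Fixpoint phi_iter (Abar : forall n : nat, 'M[int]_(n.+2, n.+1)) (n k : nat)
  {struct k} : 'cV[int]_n.+1 -> 'cV[int]_(k + n).+1 :=
  match k return 'cV[int]_n.+1 -> 'cV[int]_(k + n).+1 with
  | 0 => fun v => v
  | k'.+1 => fun v => Abar (k' + n)%N *m phi_iter Abar n k' v
  end.

From mathcomp Require Import all_boot all_order all_algebra.
From Stdlib Require Import FunctionalExtensionality.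
Import Order.TTheory GRing.Theory Num.Theory.
Local Open Scope ring_scope.

(* Since A_{n,n+1}^{-1} Abar_{n,n+1} = [I; 0], the matrices A_n satisfy
   A_{n+1} Abar_{n,n+1} v = [A_n v; 0], which gives the compatibility of the
   Phi_n; A_n is the inverse of an integer matrix, so by Cramer's rule Phi_n
   takes values in (1/det A_n^{-1}) Z.  Injectivity of Phi_n reduces to the
   linear independence of the chi_{B(r_l, l)}: the vertex r_l has a sibling,
   and paths through r_l and through that sibling agree below level l, so the
   top coefficient of a vanishing combination must be zero.  Compatibility
   makes the Phi_n descend to the direct limit, and injectivity of each Phi_n
   makes the induced map injective. *)

Section MatrixCasts.
Variable R : pzRingType.

Lemma castmx_mul m1 m2 n1 n2 p1 p2 (em : m1 = m2) (en : n1 = n2) (ep : p1 = p2)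
    (A : 'M[R]_(m1, n1)) (B : 'M[R]_(n1, p1)) :
  castmx (em, en) A *m castmx (en, ep) B = castmx (em, ep) (A *m B).
Proof. by case: m2 / em; case: n2 / en; case: p2 / ep; rewrite !castmx_id. Qed.

Lemma castmx1 m n (e : m = n) : castmx (e, e) (1%:M : 'M[R]_m) = 1%:M.
Proof. by case: n / e; rewrite castmx_id. Qed.

Lemma castmx_col_mx_widen k (u : 'cV[R]_k) (z : 'cV[R]_1) (i : 'I_k) :
  castmx (addn1 k, erefl) (col_mx u z) (widen_ord (leqnSn k) i) ord0 = u i ord0.
Proof.
rewrite castmxE cast_ord_id (_ : cast_ord _ _ = lshift 1 i) ?col_mxEu //.
exact: val_inj.
Qed.

Lemma castmx_col_mx_max k (u : 'cV[R]_k) (z : 'cV[R]_1) :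
  castmx (addn1 k, erefl) (col_mx u z) ord_max ord0 = z ord0 ord0.
Proof.
rewrite castmxE cast_ord_id (_ : cast_ord _ _ = rshift k ord0) ?col_mxEd //.
by apply: val_inj; rewrite /= addn0.
Qed.

End MatrixCasts.

Section Paths.
Context {parent : forall n : nat, 'I_n.+2 -> 'I_n.+1}.
Hypothesis parent_surj : forall n (j : 'I_n.+1), exists i : 'I_n.+2, parent n i = j.

Local Notation pth := (pth parent).

Definition child k (j : 'I_k.+1) : 'I_k.+2 := odflt ord0 [pick i | parent k i == j].

Lemma parent_child k j : parent k (child k j) = j.
Proof.
rewrite /child; case: pickP => [i /eqP //| no_child].
by have [i i_j] := parent_surj k j; move: (no_child i); rewrite i_j eqxx.
Qed.

(* Vertices are handled as natural numbers here, to avoid casts between the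
   ordinal types of different levels. *)
Definition parentN k (j : nat) : nat := parent k (inord j).
Definition childN k (j : nat) : nat := child k (inord j).

Fixpoint ancestorN d l j :=
  if d is d'.+1 then parentN l (ancestorN d' l.+1 j) else j.
Fixpoint descendantN m i d :=
  if d is d'.+1 then childN (d' + m) (descendantN m i d') else i.

Definition throughN m i l :=
  if (l <= m)%N then ancestorN (m - l) l i else descendantN m i (l - m).

Lemma descendantN_lt {m i} d : (i < m.+1)%N -> (descendantN m i d < (d + m).+1)%N.
Proof. by case: d => [//|d] /= _; rewrite /childN ltn_ord. Qed.

Lemma parentN_childN l j : (j < l.+1)%N -> parentN l (childN l j) = j.
Proof. by move=> lt_j; rewrite /parentN /childN inord_val parent_child inordK. Qed.

Lemma throughN_lt {m} (i : 'I_m.+1) l : (throughN m i l < l.+1)%N.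
Proof.
rewrite /throughN; case: (leqP l m) => [le_lm | lt_ml].
  case E: (m - l)%N => [|d] /=; last by rewrite /parentN ltn_ord.
  move/eqP: E; rewrite subn_eq0 => le_ml.
  by rewrite (_ : l = m) ?ltn_ord //; apply/eqP; rewrite eqn_leq le_lm le_ml.
by have := descendantN_lt (l - m) (ltn_ord i); rewrite subnK // ltnW.
Qed.

Lemma parentN_throughN {m} (i : 'I_m.+1) l :
  parentN l (throughN m i l.+1) = throughN m i l.
Proof.
rewrite /throughN; case: (ltngtP l m) => [lt_lm | lt_ml | ->].
- by rewrite -(subnSK lt_lm).
- rewrite (subSn (ltnW lt_ml)) /= subnK ?(ltnW lt_ml) // parentN_childN //.
  by have := descendantN_lt (l - m) (ltn_ord i); rewrite subnK // ltnW.
- by rewrite subnn subSn // subnn /= add0n parentN_childN.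
Qed.

Lemma exists_path_through {m} (i : 'I_m.+1) : exists x : Xmin parent, pth x m = i.
Proof.
have pth_ok l : parent l (Ordinal (throughN_lt i l.+1)) = Ordinal (throughN_lt i l).
  apply: val_inj; rewrite /= -(parentN_throughN i l) /parentN; congr (val (parent l _)).
  by apply: val_inj; rewrite /= inordK // throughN_lt.
exists (MkXmin parent _ pth_ok).
by apply: val_inj; rewrite /= /throughN leqnn subnn.
Qed.

Lemma pth_eq_le {x y : Xmin parent} {m l} : (l <= m)%N -> pth x m = pth y m -> pth x l = pth y l.
Proof.
move=> /subnK <-; elim: (m - l)%N => [//|d IH] eq_xy; apply: IH.
by rewrite -(pth_ok parent x) -(pth_ok parent y); congr (parent _ _).
Qed.

Lemma chiB_eq_le {x y : Xmin parent} {m l} : (l <= m)%N -> pth x m = pth y m ->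
  chiB parent l x = chiB parent l y.
Proof. by move=> le_lm eq_xy; rewrite /chiB (pth_eq_le le_lm eq_xy). Qed.

(* parent m cannot be injective, by cardinality. *)
Lemma rvert_sibling m : exists2 j : 'I_m.+2, j != rvert parent m.+1 &
  parent m j = parent m (rvert parent m.+1).
Proof.
rewrite /=; case: pickP => [i /existsP [j /andP [lt_ji /eqP eq_ji]] | no_sib] /=.
  by exists j; rewrite // neq_ltn lt_ji.
suff /leq_card : injective (parent m) by rewrite !card_ord ltnn.
move=> i j eq_ij; case: (ltngtP i j) => [lt_ij | lt_ji | /val_inj //].
- by move: (no_sib j) => /negbT /existsPn /(_ i); rewrite lt_ij eq_ij eqxx.
- by move: (no_sib i) => /negbT /existsPn /(_ j); rewrite lt_ji eq_ij eqxx.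
Qed.

Lemma sum_chiB_top_eq0 {F : nat -> rat} {k} :
    (forall x, \sum_(l < k.+2) F l * chiB parent l x = 0) -> F k.+1 = 0.
Proof.
move=> vanish; have [j j_neq j_sib] := rvert_sibling k.
have [x x_r] := exists_path_through (rvert parent k.+1).
have [y y_j] := exists_path_through j.
have eq_xy : pth x k = pth y k by rewrite -(pth_ok parent x) -(pth_ok parent y) x_r y_j.
have same_below : \sum_(l < k.+1) F l * chiB parent l x =
                   \sum_(l < k.+1) F l * chiB parent l y.
  by apply: eq_bigr => l _; rewrite (chiB_eq_le _ eq_xy) // -ltnS.
have chi_x : chiB parent k.+1 x = 1 by rewrite /chiB x_r eqxx.
have chi_y : chiB parent k.+1 y = 0 by rewrite /chiB y_j (negbTE j_neq).
have := vanish y; rewrite big_ord_recr /= -same_below chi_y mulr0 addr0 => sum_eq0.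
by have := vanish x; rewrite big_ord_recr /= sum_eq0 chi_x mulr1 add0r.
Qed.

Lemma chiB_lin_indep (F : nat -> rat) k :
    (forall x, \sum_(l < k.+1) F l * chiB parent l x = 0) ->
  forall l, (l <= k)%N -> F l = 0.
Proof.
elim: k => [|k IH] vanish l.
  rewrite leqn0 => /eqP ->; have [x _] := exists_path_through (ord0 : 'I_1).
  by have := vanish x; rewrite big_ord1 /chiB [pth x 0]ord1 eqxx mulr1.
have Fk := sum_chiB_top_eq0 vanish.
rewrite leq_eqVlt => /orP [/eqP -> // | lt_lk]; apply: IH lt_lk => x.
by have := vanish x; rewrite big_ord_recr /= Fk mul0r addr0.
Qed.

End Paths.

Section Phi.
Variable Abar : forall n : nat, 'M[int]_(n.+2, n.+1).
Variable c : forall n : nat, 'cV[int]_(n.+2).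
Variable parent : forall n : nat, 'I_n.+2 -> 'I_n.+1.
Hypothesis parent_surj : forall n (j : 'I_n.+1), exists i : 'I_n.+2, parent n i = j.
Hypothesis Afull_det_neq0 : forall n, \det (Afull Abar c n) != 0.

Local Notation ir := (map_mx (intr : int -> rat)).
Local Notation Aseq := (Aseq Abar c).
Local Notation Phi := (Phi Abar c parent).

Lemma Afull_unit n : ir (Afull Abar c n) \in unitmx.
Proof. by rewrite unitmxE unitfE det_map_mx intr_eq0 Afull_det_neq0. Qed.

Lemma Aseq_Abar n (v : 'cV[int]_n.+1) :
  Aseq n.+1 *m ir (Abar n *m v) = castmx (addn1 n.+1, erefl) (col_mx (Aseq n *m ir v) 0).
Proof.
have -> : ir (Abar n *m v) = ir (Afull Abar c n) *m castmx (addn1 n.+1, erefl) (col_mx (ir v) 0).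
  rewrite /Afull map_castmx map_row_mx -[row_mx _ _](castmx_id (erefl, erefl)).
  by rewrite castmx_mul mul_row_col mulmx0 addr0 castmx_id map_mxM.
rewrite /= -mulmxA (mulmxA (Ainv _ _ _)) /Ainv mulVmx ?Afull_unit // mul1mx.
by rewrite castmx_mul mul_block_col !mulmx0 mul0mx !addr0.
Qed.

Lemma Phi_Abar n (v : 'cV[int]_n.+1) : Phi n.+1 (Abar n *m v) = Phi n v.
Proof.
apply: functional_extensionality => x.
rewrite /Phi big_ord_recr /= Aseq_Abar castmx_col_mx_max mxE mul0r addr0.
by apply: eq_bigr => i _; rewrite castmx_col_mx_widen.
Qed.

Fixpoint Aseq_invZ n : 'M[int]_n.+1 :=
  if n is m.+1 then
    Afull Abar c m *m castmx (addn1 m.+1, addn1 m.+1) (block_mx (Aseq_invZ m) 0 0 1%:M)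
  else 1%:M.

Lemma Aseq_invZ_mul n : ir (Aseq_invZ n) *m Aseq n = 1%:M.
Proof.
elim: n => [|n IH]; first by rewrite /= map_mx1 mul1mx.
(* Naming [ir (Afull _ _ n)] keeps [map_castmx] from unfolding [Afull]. *)
rewrite [Aseq_invZ _]/= [Aseq _]/= map_mxM; set AF := ir (Afull Abar c n).
rewrite map_castmx map_block_mx map_mx1 !map_mx0 -mulmxA.
rewrite (mulmxA (castmx _ _)) castmx_mul mulmx_block IH !mulmx0 !mul0mx !addr0 !add0r.
by rewrite mul1mx -scalar_mx_block castmx1 mul1mx /Ainv mulmxV // Afull_unit.
Qed.

Lemma Aseq_unit n : Aseq n \in unitmx.
Proof. by have [_ ->] := mulmx1_unit (Aseq_invZ_mul n). Qed.

Lemma invmx_Aseq n : invmx (Aseq n) = ir (Aseq_invZ n).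
Proof. by rewrite -[RHS]mulmx1 -(mulmxV (Aseq_unit n)) mulmxA Aseq_invZ_mul mul1mx. Qed.

Lemma PhiD n u v x : Phi n (u + v) x = Phi n u x + Phi n v x.
Proof.
rewrite /Phi -big_split /=; apply: eq_bigr => i _.
by rewrite map_mxD mulmxDr mxE mulrDl.
Qed.

Lemma Phi_in_CXG n v : (1 <= n)%N -> in_CXG Abar c parent (Phi n v).
Proof.
move=> n_gt0; split=> x; last first.
  exists n => y eq_yx; apply: eq_bigr => l _.
  by rewrite (chiB_eq_le _ eq_yx) // -ltnS.
exists n; split => //.
exists (\sum_(l < n.+1) (\adj (Aseq_invZ n) *m v) l ord0 * (pth parent x l == rvert parent l)%:R).
have M_unit : ir (Aseq_invZ n) \in unitmx by rewrite -invmx_Aseq unitmx_inv Aseq_unit.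
rewrite invmx_Aseq rmorph_sum mulr_suml /Phi; apply: eq_bigr => l _.
rewrite -[Aseq n]invmxK invmx_Aseq {1}/invmx M_unit -map_mx_adj -scalemxAl -map_mxM.
by rewrite mxE mxE det_map_mx /chiB rmorphM rmorph_nat -[LHS]mulrA [LHS]mulrC.
Qed.

Lemma Phi_inj n : injective (Phi n).
Proof.
move=> u v eq_uv; apply/eqP; rewrite -subr_eq0; apply/eqP.
pose w := Aseq n *m ir (u - v).
have w_eq0 l : (l <= n)%N -> w (inord l) ord0 = 0.
  apply: (chiB_lin_indep parent_surj (fun l => w (inord l) ord0) n) => x.
  transitivity (Phi n u x - Phi n v x); last by rewrite eq_uv subrr.
  rewrite /Phi -sumrB; apply: eq_bigr => i _.
  by rewrite /w inord_val map_mxB mulmxBr !mxE mulrBl.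
have /(congr1 (mulmx (ir (Aseq_invZ n)))) : w = 0.
  by apply/matrixP => i j; rewrite ord1 [RHS]mxE -(inord_val i) w_eq0 // -ltnS.
rewrite mulmxA Aseq_invZ_mul mul1mx mulmx0 => /matrixP ir_eq0.
by apply/matrixP => i j; have /eqP := ir_eq0 i j; rewrite !mxE intr_eq0 => /eqP.
Qed.

Lemma Phi0_const1 : Phi 0 (const_mx 1) = fun _ => 1.
Proof.
apply: functional_extensionality => x.
by rewrite /Phi big_ord1 /= mul1mx !mxE /chiB [pth _ _ 0]ord1 eqxx mulr1.
Qed.

End Phi.

Section DirectLimit.
Context {A : forall n : nat, 'M[int]_(n.+2, n.+1)}.

Lemma phi_iterB n k (u v : 'cV[int]_n.+1) :
  phi_iter A n k (u - v) = phi_iter A n k u - phi_iter A n k v.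
Proof. by elim: k => //= k ->; rewrite mulmxBr. Qed.

Lemma compatible_phi_iter {T : Type} {G : forall n : nat, 'cV[int]_n.+1 -> T} :
    (forall n (v : 'cV[int]_n.+1), G n.+1 (A n *m v) = G n v) ->
  forall n k v, G (k + n)%N (phi_iter A n k v) = G n v.
Proof. by move=> G_step n k v; elim: k => //= k <-; rewrite G_step. Qed.

Lemma lift_level {n} (v : 'cV[int]_n.+1) {N} : (n <= N)%N ->
  exists w : 'cV[int]_N.+1, forall (T : Type) (G : forall n : nat, 'cV[int]_n.+1 -> T),
    (forall m (u : 'cV[int]_m.+1), G m.+1 (A m *m u) = G m u) -> G N w = G n v.
Proof.
move/subnK <-; exists (phi_iter A n (N - n) v) => T G G_step.
exact: compatible_phi_iter.
Qed.

Context {K : zmodType} {iota : forall n : nat, 'cV[int]_n.+1 -> K}.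
Hypothesis iotaD : forall n (u v : 'cV[int]_n.+1), iota n (u + v) = iota n u + iota n v.
Hypothesis iota_step : forall n (v : 'cV[int]_n.+1), iota n.+1 (A n *m v) = iota n v.
Hypothesis iota_surj : forall a : K, exists n (v : 'cV[int]_n.+1), a = iota n v.
Hypothesis iota_ker : forall n (v : 'cV[int]_n.+1),
  iota n v = 0 -> exists k : nat, phi_iter A n k v = 0.

Lemma iotaB n (u v : 'cV[int]_n.+1) : iota n (u - v) = iota n u - iota n v.
Proof. by apply: (addIr (iota n v)); rewrite -iotaD !subrK. Qed.

Lemma common_level n0 (a b : K) : exists N (v w : 'cV[int]_N.+1),
  [/\ (n0 <= N)%N, a = iota N v & b = iota N w].
Proof.
have [n [v ->]] := iota_surj a; have [m [w ->]] := iota_surj b.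
have [v' lift_v] := lift_level v (leq_trans (leq_addr m n) (leq_addr n0 _)).
have [w' lift_w] := lift_level w (leq_trans (leq_addl n m) (leq_addr n0 _)).
by exists (n + m + n0)%N, v', w'; rewrite leq_addl (lift_v _ _ iota_step) (lift_w _ _ iota_step).
Qed.

Context {X : Type} {R : zmodType} {F : forall n : nat, 'cV[int]_n.+1 -> X -> R}.
Hypothesis F_step : forall n (v : 'cV[int]_n.+1), F n.+1 (A n *m v) = F n v.

Lemma F_iota_eq n (v : 'cV[int]_n.+1) m (w : 'cV[int]_m.+1) :
  iota n v = iota m w -> F n v = F m w.
Proof.
move=> eq_vw.
have [v' lift_v] := lift_level v (leq_addr m n).
have [w' lift_w] := lift_level w (leq_addl n m).
rewrite -(lift_v _ _ F_step) -(lift_w _ _ F_step).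
have /iota_ker [k] : iota (n + m) (v' - w') = 0.
  by rewrite iotaB (lift_v _ _ iota_step) (lift_w _ _ iota_step) eq_vw subrr.
rewrite phi_iterB => /eqP; rewrite subr_eq0 => /eqP eq_iter.
by rewrite -(compatible_phi_iter F_step _ k v') eq_iter compatible_phi_iter.
Qed.

Lemma exists_level_rep (a : K) :
  exists p : {n : nat & 'cV[int]_n.+1}, a == iota (tag p) (tagged p).
Proof. by have [n [v ->]] := iota_surj a; exists (Tagged (fun n => 'cV_n.+1) v). Qed.

Definition limit_map (a : K) : X -> R :=
  let p := xchoose (exists_level_rep a) in F (tag p) (tagged p).

Lemma limit_map_iota n (v : 'cV[int]_n.+1) : limit_map (iota n v) = F n v.
Proof. by apply: F_iota_eq; apply/esym/eqP; apply: (xchooseP (exists_level_rep _)). Qed.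

Hypothesis FD : forall n (u v : 'cV[int]_n.+1) x, F n (u + v) x = F n u x + F n v x.

Lemma limit_mapD a b x : limit_map (a + b) x = limit_map a x + limit_map b x.
Proof.
have [N [v [w [_ -> ->]]]] := common_level 0 a b.
by rewrite -iotaD !limit_map_iota FD.
Qed.

Hypothesis F_inj : forall n, injective (F n).

Lemma limit_map_inj : injective limit_map.
Proof.
move=> a b; have [N [v [w [_ -> ->]]]] := common_level 0 a b.
by rewrite !limit_map_iota => /F_inj ->.
Qed.

End DirectLimit.

Theorem mainTheorem9
  (Abar : forall n : nat, 'M[int]_(n.+2, n.+1))
  (c : forall n : nat, 'cV[int]_(n.+2))
  (parent : forall n : nat, 'I_n.+2 -> 'I_n.+1)
  (HAnat : forall n i j, 0 <= Abar n i j)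
  (HArank : forall n, \rank (map_mx intr (Abar n) : 'M[rat]_(n.+2, n.+1)) = n.+1)
  (Hedge : forall n (i : 'I_n.+2), 0 < Abar n i (parent n i))
  (Hemit : forall n (j : 'I_n.+1), exists i : 'I_n.+2, parent n i = j)
  (Hinv : forall n, \det (Afull Abar c n) != 0) :
  (forall n : nat, (1 <= n)%N ->
     (forall v : 'cV[int]_n.+1, in_CXG Abar c parent (Phi Abar c parent n v)) /\
     injective (Phi Abar c parent n) /\
     (forall v : 'cV[int]_n.+1,
        Phi Abar c parent n.+1 (Abar n *m v) = Phi Abar c parent n v)) /\
  (forall (K : zmodType) (iota : forall n : nat, 'cV[int]_n.+1 -> K),
     (forall n (u v : 'cV[int]_n.+1), iota n (u + v) = iota n u + iota n v) ->
     (forall n (v : 'cV[int]_n.+1), iota n.+1 (Abar n *m v) = iota n v) ->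
     (forall k : K, exists n (v : 'cV[int]_n.+1), k = iota n v) ->
     (forall n (v : 'cV[int]_n.+1), iota n v = 0 ->
        exists k : nat, phi_iter Abar n k v = 0) ->
     exists Psi : K -> Xmin parent -> rat,
       (forall a b x, Psi (a + b) x = Psi a x + Psi b x) /\
       injective Psi /\
       (forall a, in_CXG Abar c parent (Psi a)) /\
       (forall n : nat, (1 <= n)%N -> forall v : 'cV[int]_n.+1,
          Psi (iota n v) = Phi Abar c parent n v) /\
       Psi (iota 0%N (const_mx 1)) = (fun _ => 1)).
Proof.
split=> [n n_gt0 | K iota iotaD iota_step iota_surj iota_ker].
  split; [move=> v; exact: Phi_in_CXG | split; [exact: Phi_inj | exact: Phi_Abar]].
have Phi_step := Phi_Abar Abar c parent Hinv.
have Psi_iota := limit_map_iota iotaD iota_step iota_surj iota_ker Phi_step.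
exists (limit_map (F := Phi Abar c parent) iota_surj).
split; first exact (limit_mapD iotaD iota_step iota_surj iota_ker Phi_step
                                 (PhiD Abar c parent)).
split; first exact (limit_map_inj iotaD iota_step iota_surj iota_ker Phi_step
                                  (Phi_inj Abar c parent Hemit Hinv)).
split.
  move=> a; have [N [v [_ [N_gt0 -> _]]]] := common_level iota_step iota_surj 1 a a.
  by rewrite Psi_iota; apply: Phi_in_CXG.
by split=> [n _ v|]; rewrite Psi_iota ?Phi0_const1.
Qed.
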